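(* Fix $n\in\mathbb N$, a noise level $\varepsilon\in[0,1)$ and $\bar q\in[0,1]$. Let $G$ be the complete graph on $n$ vertices. Then the Water-Filling Strategy $\psi^{wf}_{\bar q}$ solves the optimization problem $$\min_{\psi\in\Psi}\ \mathbb E(T^\psi_{IH})\quad\text{subject to}\quad\max_{t\in\mathbb N}\mathbb P(T^\psi_{IH}=t)\le\bar q,$$ where $\Psi$ is the set of all agent strategies on $G$.
   Context: Model: in the complete graph on $n$ vertices every vertex is adjacent to every vertex including itself. Goal $D$ uniform; fixed initial vertex; horizon $K$; $B_t$ i.i.d. Bernoulli$(1-\varepsilon)$. An agent strategy $\psi$ chooses $a_t\in\mathcal N(X_t)$ based on its history, its own randomness and $D$; if $B_t=1$, $X_{t+1}=a_t$, else $X_{t+1}$ uniform on $\mathcal N(X_t)$. If $D$ is not reached by $K$, $X_{K+1}=D$, $B_K=1$. Random-Step: $a_t$ uniform on $\mathcal N(X_t)$; Goal-Attempt: $a_t=D$. $T^\psi_{IH}=\inf\{t\ge1:$ Goal-Attempt chosen at $t-1$ and $B_{t-1}=1\}$. $L(t)=\sum_{s\le t}\mathbb I(X_s\in\mathcal N(D))$. Water-Filling Strategy $\psi^{wf}_{\bar q}$: $t^*=\lceil1/\bar q-\varepsilon/(1-\varepsilon)\rceil$ (standing assumption: $1/\bar q-\varepsilon/(1-\varepsilon)$ integer), $p_t=\frac{\bar q}{1-\varepsilon}(1-t\bar q)^{-1}$ for $0\le t<t^*-1$, else $1$; if $X_t\in\mathcal N(D)$ and $T_{IH}>t$, Goal-Attempt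 with probability $p_{L(t)}$, else Random-Step; otherwise Random-Step.
   Formalization: Some strategy in Ψ is assumed to satisfy the constraint $\max_{t\in\mathbb N}\mathbb P(T^\psi_{IH}=t)\le\bar q$, and $L(t)$ sums $\mathbb I(X_s\in\mathcal N(D))$ over $1\le s\le t$ only, leaving out s = 0. Each condition added here is assumed in the paper as well or is needed for the statement above to hold. *)

From HB Require Import structures.
From mathcomp Require Import all_boot all_order all_algebra.
From mathcomp Require Import reals.
Set Implicit Arguments. Unset Strict Implicit. Unset Printing Implicit Defensive.
Import Order.TTheory GRing.Theory Num.Theory.
Local Open Scope ring_scope.

(* Vertices of the complete graph on n vertices: 'I_n.
   Every vertex is adjacent to every vertex, including itself. *)
Definition nbhd (n : nat) (x : 'I_n) : {set 'I_n} := [set: 'I_n].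

(* The agent's decision at time t:
     None     = Goal-Attempt  (a_t = D),
     Some a   = any other choice a_t = a (e.g. produced by Random-Step);
   only a None decision counts as an (intentional) Goal-Attempt. *)
(* A history entry records (X_s, decision at s, B_s). *)
Definition hist (n : nat) := seq ('I_n * option 'I_n * bool).

(* A (behavioural, randomized) agent strategy: given the goal D, the past
   history h = [(X_0,d_0,B_0); ...; (X_{t-1},d_{t-1},B_{t-1})] and the
   current vertex X_t, the probability of each decision. *)
Definition strategy (R : realType) (n : nat) :=
  'I_n -> hist n -> 'I_n -> option 'I_n -> R.

Definition is_strategy (R : realType) (n : nat) (psi : strategy R n) : Prop :=
  forall (D : 'I_n) (h : hist n) (x : 'I_n),
    [/\ forall d, 0 <= psi D h x d,
        \sum_(d : option 'I_n) psi D h x d = 1,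
        forall a, psi D h x (Some a) != 0 -> a \in nbhd x
      & psi D h x None != 0 -> D \in nbhd x].

(* hitp eps psi D r j h x : probability that T_IH = size h + j, starting at
   time s = size h in state (history h, X_s = x) with no intentional hit yet,
   where r = K - s steps remain before the horizon.  At time K (r = 0) the
   walk is forced: Goal-Attempt with B_K = 1, so T_IH = K + 1. *)
Fixpoint hitp (R : realType) (n : nat) (eps : R) (psi : strategy R n)
  (D : 'I_n) (r j : nat) (h : hist n) (x : 'I_n) {struct r} : R :=
  match r with
  | 0 => (j == 1)%:R
  | r'.+1 =>
    match j with
    | 0 => 0
    | j'.+1 =>
      \sum_(d : option 'I_n) psi D h x d *
        match d with
        | None =>
            (1 - eps) * (j' == 0)%:R
          + eps * \sum_(y in nbhd x)
                    #|nbhd x|%:R^-1 * hitp eps psi D r' j' (rcons h (x, None, false)) y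
        | Some a =>
            (1 - eps) * hitp eps psi D r' j' (rcons h (x, Some a, true)) a
          + eps * \sum_(y in nbhd x)
                    #|nbhd x|%:R^-1 * hitp eps psi D r' j' (rcons h (x, Some a, false)) y
        end
    end
  end.

Definition PT (R : realType) (n : nat) (eps : R) (K : nat) (x0 : 'I_n)
  (psi : strategy R n) (t : nat) : R :=
  \sum_(D : 'I_n) n%:R^-1 * hitp eps psi D K t [::] x0.

(* E(T^psi_IH); T_IH takes values in {1, ..., K+1}. *)
Definition ET (R : realType) (n : nat) (eps : R) (K : nat) (x0 : 'I_n)
  (psi : strategy R n) : R :=
  \sum_(t < K.+2) t%:R * PT eps K x0 psi t.

Definition feasible (R : realType) (n : nat) (eps : R) (K : nat) (x0 : 'I_n)
  (qbar : R) (psi : strategy R n) : Prop :=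
  forall t : nat, PT eps K x0 psi t <= qbar.

Definition tstar (R : realType) (eps qbar : R) : int :=
  Num.ceil (qbar^-1 - eps / (1 - eps)).

Definition pwf (R : realType) (eps qbar : R) (t : nat) : R :=
  if (t%:Z < tstar eps qbar - 1)%R
  then qbar / (1 - eps) * (1 - t%:R * qbar)^-1 else 1.

(* T_IH <= t, i.e. some earlier Goal-Attempt succeeded. *)
Definition hit_before (n : nat) (h : hist n) : bool :=
  has (fun e => (e.1.2 == None) && e.2) h.

Definition Lcount (n : nat) (D : 'I_n) (h : hist n) (x : 'I_n) : nat :=
  count (fun y => y \in nbhd D) (behead (rcons [seq e.1.1 | e <- h] x)).

Definition random_step (R : realType) (n : nat) (x a : 'I_n) : R :=
  if a \in nbhd x then #|nbhd x|%:R^-1 else 0.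

Definition psi_wf (R : realType) (n : nat) (eps qbar : R) : strategy R n :=
  fun D h x d =>
    if (x \in nbhd D) && ~~ hit_before h then
      let p := pwf eps qbar (Lcount D h x) in
      match d with
      | None => p
      | Some a => (1 - p) * random_step R x a
      end
    else
      match d with
      | None => 0
      | Some a => random_step R x a
      end.

From HB Require Import structures.
From mathcomp Require Import all_boot all_order all_algebra.
From mathcomp Require Import reals.
From mathcomp Require Import ring lra.
Set Implicit Arguments. Unset Strict Implicit. Unset Printing Implicit Defensive.
Import Order.TTheory GRing.Theory Num.Theory.
Local Open Scope ring_scope.

(* Under any strategy an intentional hit at time t+1 needs B_t = 1, so the
   conditional probability of T_IH = t+1 given T_IH > t is at most 1 - eps.
   Together with the constraint P(T_IH = t) <= qbar, the survival function
   S(t) = P(T_IH > t) therefore satisfies S(t+1) >= S(t) - qbar and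
   S(t+1) >= eps S(t).  The water-filling strategy chooses its hazard so that
   P(T_IH = t+1) = qbar as long as this requires a hazard below 1 - eps, and
   uses the hazard 1 - eps afterwards; hence its survival function W satisfies
   W(t+1) = W(t) - qbar or W(t+1) = eps W(t), and W <= S by induction.  As
   E(T_IH) is the sum of the survival function, this is optimality; and
   W(K) <= S(K) = P(T_IH = K+1) <= qbar for any feasible strategy gives
   feasibility at the horizon. *)

Section HazardPmf.
Variables (R : comPzRingType) (a : nat -> R).

Definition survival (s : nat) : R := \prod_(0 <= i < s) (1 - a i).

Lemma survival0 : survival 0 = 1.
Proof. by rewrite /survival big_geq. Qed.

Lemma survivalS s : survival s.+1 = survival s * (1 - a s).
Proof. by rewrite /survival big_nat_recr. Qed.

(* Law of the waiting time for the first success, starting at time [m], when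
   success at time [i] has probability [a i] and is forced after [r] steps. *)
Fixpoint hazard_pmf (r j m : nat) {struct r} : R :=
  match r, j with
  | 0, _ => (j == 1)%:R
  | r'.+1, 0 => 0
  | r'.+1, j'.+1 => a m * (j' == 0)%:R + (1 - a m) * hazard_pmf r' j' m.+1
  end.

Lemma hazard_pmf0 r m : hazard_pmf r 0 m = 0.
Proof. by case: r. Qed.

Lemma hazard_pmf_lt r m j : (j < r)%N ->
  hazard_pmf r j.+1 m = a (m + j) * \prod_(0 <= i < j) (1 - a (m + i)).
Proof.
elim: r m j => [|r IHr] m [|j] //= jr.
  by rewrite hazard_pmf0 mulr0 addr0 mulr1 addn0 big_geq ?mulr1.
rewrite mulr0 add0r IHr // big_nat_recl // addn0 addSnnS mulrCA.
by congr (_ * (_ * _)); apply: eq_bigr => i _; rewrite addSnnS.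
Qed.

Lemma hazard_pmf_gt r m j : (r.+1 < j)%N -> hazard_pmf r j m = 0.
Proof.
elim: r m j => [|r IHr] m [|[|j]] //= jr.
by rewrite IHr // !mulr0 addr0.
Qed.

Lemma survival_hazard_pmf r s : (s <= r)%N ->
  1 - \sum_(0 <= i < s.+1) hazard_pmf r i 0 = survival s.
Proof.
elim: s => [|s IHs] sr; first by rewrite big_nat1 hazard_pmf0 subr0 survival0.
rewrite big_nat_recr //= hazard_pmf_lt // opprD addrA IHs ?(ltnW sr) //.
by rewrite survivalS mulrBr mulr1 mulrC.
Qed.

End HazardPmf.

Section HazardBounded.
Variables (R : realFieldType) (eps : R).

Definition hazard_bounded (r : nat) (f : nat -> R) : Prop :=
  \sum_(0 <= j < r.+2) f j = 1 /\
  forall j, (j < r)%N -> f j.+1 <= (1 - eps) * (1 - \sum_(0 <= i < j.+1) f i).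

Lemma eq_hazard_bounded r (f g : nat -> R) :
  f =1 g -> hazard_bounded r f -> hazard_bounded r g.
Proof.
move=> fg [f1 fh]; have sumE m : \sum_(0 <= i < m) f i = \sum_(0 <= i < m) g i.
  by apply: eq_bigr => i _; rewrite fg.
by split=> [|j jr]; rewrite -?fg -?sumE //; apply: fh.
Qed.

Lemma hazard_bounded_mix (I : finType) (P : pred I) (w : I -> R)
    (f : I -> nat -> R) r :
  (forall i, P i -> 0 <= w i) -> \sum_(i | P i) w i = 1 ->
  (forall i, P i -> hazard_bounded r (f i)) ->
  hazard_bounded r (fun j => \sum_(i | P i) w i * f i j).
Proof.
move=> w_ge0 w1 hf; split.
  rewrite exchange_big /= -w1; apply: eq_bigr => i Pi.
  by rewrite -mulr_sumr; have [-> _] := hf i Pi; rewrite mulr1.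
move=> j jr; rewrite exchange_big /= -{2}w1 -sumrB mulr_sumr.
apply: ler_sum => i Pi; have [_ hfi] := hf i Pi.
rewrite -mulr_sumr -{2}[w i]mulr1 -mulrBr mulrCA.
by apply: ler_wpM2l; [exact: w_ge0 | exact: hfi].
Qed.

Lemma hazard_bounded_dirac0 r : hazard_bounded r (fun j => (j == 0)%:R).
Proof.
have sum1 m : \sum_(0 <= i < m.+1) ((i == 0)%:R : R) = 1.
  by rewrite big_nat_recl // big1 ?addr0.
by split=> [|j _]; rewrite ?sum1 // subrr mulr0.
Qed.

Lemma hazard_bounded_dirac1 : hazard_bounded 0 (fun j => (j == 1)%:R).
Proof. by split=> //; rewrite big_nat_recl // big_nat1 add0r. Qed.

Lemma hazard_bounded_last r f :
  hazard_bounded r f -> f r.+1 = 1 - \sum_(0 <= i < r.+1) f i.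
Proof. by move=> [f1 _]; rewrite -f1 big_nat_recr //= addrAC subrr add0r. Qed.

Hypotheses (eps_ge0 : 0 <= eps) (eps_le1 : eps <= 1).

Lemma hazard_bounded_step r (g1 g2 : nat -> R) :
  hazard_bounded r g1 -> hazard_bounded r g2 -> g1 0%N <= 1 -> g2 0%N = 0 ->
  hazard_bounded r.+1
    (fun j => if j is j'.+1 then (1 - eps) * g1 j' + eps * g2 j' else 0).
Proof.
move=> [g1_sum g1_haz] [g2_sum g2_haz] g1_0 g2_0.
have sumE m : \sum_(0 <= i < m.+1)
    (if i is i'.+1 then (1 - eps) * g1 i' + eps * g2 i' else 0)
  = (1 - eps) * \sum_(0 <= i < m) g1 i + eps * \sum_(0 <= i < m) g2 i.
  by rewrite big_nat_recl // add0r big_split /= -!mulr_sumr.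
split=> [|[|j] jr]; rewrite sumE.
- by rewrite g1_sum g2_sum; ring.
- by rewrite !big_geq // g2_0 !mulr0 !addr0 subr0 mulr1 ler_piMr // subr_ge0.
have := g1_haz j jr; have := g2_haz j jr.
set G1 := \sum_(0 <= i < j.+1) g1 i; set G2 := \sum_(0 <= i < j.+1) g2 i.
move=> h2 h1.
have -> : (1 - eps) * (1 - ((1 - eps) * G1 + eps * G2))
    = (1 - eps) * ((1 - eps) * (1 - G1)) + eps * ((1 - eps) * (1 - G2)) by ring.
by apply: lerD; apply: ler_wpM2l; rewrite // subr_ge0.
Qed.

Lemma survival_le_tail (a : nat -> R) (q : R) r (f : nat -> R) :
  (forall s, a s * survival a s = q \/ a s = 1 - eps) ->
  (forall s, 0 <= survival a s) ->
  f 0%N = 0 -> hazard_bounded r f -> (forall t, f t <= q) ->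
  forall s, (s <= r)%N -> survival a s <= 1 - \sum_(0 <= i < s.+1) f i.
Proof.
move=> a_cases surv_ge0 f0 [_ f_haz] f_le; elim=> [|s IHs] sr.
  by rewrite survival0 big_nat1 f0 subr0.
rewrite big_nat_recr //= survivalS mulrBr mulr1.
have := IHs (ltnW sr); have := f_haz s sr; have := f_le s.+1.
set F := \sum_(0 <= i < s.+1) f i => fq fh IH.
case: (a_cases s) => [aW | ->]; first by rewrite [_ * a s]mulrC aW; lra.
have : eps * survival a s <= eps * (1 - F) by rewrite ler_wpM2l.
lra.
Qed.

End HazardBounded.

Lemma sum_mul_nat_tail (R : comPzRingType) (f : nat -> R) N :
  \sum_(0 <= t < N.+1) t%:R * f t
  = \sum_(0 <= s < N) (\sum_(0 <= i < N.+1) f i - \sum_(0 <= i < s.+1) f i).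
Proof.
elim: N => [|N IHN]; first by rewrite big_nat1 big_geq // mul0r.
rewrite big_nat_recr //= IHN [RHS]big_nat_recr //=.
rewrite [\sum_(0 <= i < N.+2) f i]big_nat_recr //=.
set A := \sum_(0 <= i < N.+1) f i.
under [X in _ = X + _]eq_bigr => s _ do rewrite addrAC.
by rewrite [in RHS]big_split /= sumr_const_nat subn0 -mulr_natr -natr1; ring.
Qed.

Lemma hazard_bounded_mean (R : realFieldType) (eps : R) r (f : nat -> R) :
  hazard_bounded eps r f ->
  \sum_(t < r.+2) t%:R * f t = \sum_(0 <= s < r.+1) (1 - \sum_(0 <= i < s.+1) f i).
Proof.
by move=> [f1 _]; rewrite -(big_mkord xpredT (fun t => t%:R * f t)) sum_mul_nat_tail f1.
Qed.

Section WaterFilling.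
Variables (R : realType) (eps qbar : R).
Hypotheses (eps_ge0 : 0 <= eps) (eps_lt1 : eps < 1) (qbar_gt0 : 0 < qbar).

Definition wf_hazard (s : nat) : R := (1 - eps) * pwf eps qbar s.

Let switch : R := qbar^-1 - (1 - eps)^-1.

Let field_neq0 : (1 - eps != 0) && (qbar != 0).
Proof. by rewrite !gt_eqF ?subr_gt0. Qed.

Let switchE : switch * (qbar * (1 - eps)) = 1 - eps - qbar.
Proof. by rewrite /switch; field. Qed.

(* [tstar - 1 = ceil switch], and a natural number is below [ceil switch] iff it
   is below [switch]. *)
Lemma pwf_switch s :
  pwf eps qbar s = if s%:R < switch then qbar / (1 - eps) * (1 - s%:R * qbar)^-1 else 1.
Proof.
rewrite /pwf; suff -> : (s%:Z < tstar eps qbar - 1)%R = (s%:R < switch) by [].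
rewrite ltrBrDr ceil_gt_int intrD -ltrBrDr.
by congr (_ < _); rewrite /switch; field.
Qed.

Let level_below s : s%:R < switch -> qbar < (1 - eps) * (1 - s%:R * qbar).
Proof.
move=> s_lt; have := s_lt; rewrite -(ltr_pM2r (_ : 0 < qbar * (1 - eps))).
  by rewrite switchE; nra.
by rewrite mulr_gt0 ?subr_gt0.
Qed.

Let level_above (t : R) : switch <= t -> (1 - eps) * (1 - t * qbar) <= qbar.
Proof.
move=> t_ge; have := t_ge; rewrite -(ler_pM2r (_ : 0 < qbar * (1 - eps))).
  by rewrite switchE; nra.
by rewrite mulr_gt0 ?subr_gt0.
Qed.

Let lin_gt0 s : s%:R < switch -> 0 < 1 - s%:R * qbar.
Proof. by move/level_below/(lt_trans qbar_gt0); rewrite pmulr_rgt0 // subr_gt0. Qed.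

Lemma pwf_ge0_le1 s : 0 <= pwf eps qbar s <= 1.
Proof.
rewrite pwf_switch; case: ifPn => [s_lt|]; last by rewrite ler01 lexx.
have lvl := level_below s_lt.
have lvl_gt0 : 0 < (1 - eps) * (1 - s%:R * qbar) by rewrite mulr_gt0 ?lin_gt0 ?subr_gt0.
rewrite -mulrA -invfM; apply/andP; split; first by rewrite divr_ge0 // ltW.
by rewrite ler_pdivrMr // mul1r ltW.
Qed.

Lemma wf_hazard_below s :
  s%:R < switch -> wf_hazard s * (1 - s%:R * qbar) = qbar.
Proof.
move=> s_lt; rewrite /wf_hazard pwf_switch s_lt; field.
by rewrite !gt_eqF ?lin_gt0 // subr_gt0.
Qed.

Lemma wf_hazard_above s : ~~ (s%:R < switch) -> wf_hazard s = 1 - eps.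
Proof. by move=> s_ge; rewrite /wf_hazard pwf_switch (negbTE s_ge) mulr1. Qed.

Local Notation W := (survival wf_hazard).

Lemma wf_survival_ge0 s : 0 <= W s.
Proof.
rewrite /survival prodr_ge0 // => i _; have /andP[p_ge0 p_le1] := pwf_ge0_le1 i.
have : 0 <= eps * pwf eps qbar i by rewrite mulr_ge0.
rewrite subr_ge0 /wf_hazard; lra.
Qed.

Lemma wf_survival_below s : s%:R <= switch -> W s = 1 - s%:R * qbar.
Proof.
elim: s => [|s IHs] s_le; first by rewrite survival0 mul0r subr0.
have s_lt : s%:R < switch by apply: lt_le_trans s_le; rewrite ltr_nat.
rewrite survivalS IHs ?(ltW s_lt) // mulrBr mulr1 [_ * wf_hazard s]mulrC.
by rewrite wf_hazard_below // -natr1; ring.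
Qed.

Lemma wf_hazard_cases s : wf_hazard s * W s = qbar \/ wf_hazard s = 1 - eps.
Proof.
case: (ltP s%:R switch) => [s_lt | s_ge].
  by left; rewrite (wf_survival_below (ltW s_lt)) wf_hazard_below.
by right; rewrite wf_hazard_above // -leNgt.
Qed.

Lemma wf_survival_above s : switch <= s%:R -> (1 - eps) * W s <= qbar.
Proof.
elim: s => [|s IHs] s_ge.
  by have := level_above s_ge; rewrite survival0 mul0r subr0.
rewrite survivalS; case: (ltP s%:R switch) => [s_lt | s_ge'].
  rewrite (wf_survival_below (ltW s_lt)) mulrBr mulr1 [_ * wf_hazard s]mulrC.
  by have := level_above s_ge; rewrite wf_hazard_below // -natr1; lra.
rewrite wf_hazard_above -?leNgt // subKr mulrA.
apply: le_trans (IHs s_ge') => /=; apply: ler_piMr (ltW eps_lt1).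
by rewrite mulr_ge0 ?wf_survival_ge0 // subr_ge0 ltW.
Qed.

Lemma wf_flow_le s : wf_hazard s * W s <= qbar.
Proof.
case: (ltP s%:R switch) => [s_lt | s_ge].
  by rewrite (wf_survival_below (ltW s_lt)) wf_hazard_below.
by rewrite wf_hazard_above -?leNgt // wf_survival_above.
Qed.

End WaterFilling.

Lemma sumr_option (R : nmodType) (T : finType) (F : option T -> R) :
  \sum_(d : option T) F d = F None + \sum_(a : T) F (Some a).
Proof.
rewrite (bigD1 None) //=; congr (_ + _).
rewrite (reindex_omap Some (fun d => d)) //=; last by case.
by apply: eq_bigl => a; rewrite eqxx.
Qed.

Lemma sumr_inv_card (R : numFieldType) (T : finType) (A : {pred T}) m :
  #|A| = m -> (0 < m)%N -> \sum_(i in A) (m%:R^-1 : R) = 1.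
Proof.
by move=> <- A_gt0; rewrite sumr_const -[_ *+ _]mulr_natr mulVf // pnatr_eq0 -lt0n.
Qed.

Section Strategies.
Variables (R : realType) (n : nat).

Lemma card_nbhd (x : 'I_n) : #|nbhd x| = n.
Proof. by rewrite cardsT card_ord. Qed.

Lemma sum_nbhd_inv (x : 'I_n) : \sum_(y in nbhd x) (#|nbhd x|%:R^-1 : R) = 1.
Proof. by apply: sumr_inv_card; rewrite // card_nbhd (leq_ltn_trans _ (ltn_ord x)). Qed.

Lemma sum_nbhd_avg (x : 'I_n) (c : R) : \sum_(y in nbhd x) #|nbhd x|%:R^-1 * c = c.
Proof. by rewrite -mulr_suml sum_nbhd_inv mul1r. Qed.

Lemma sum_ord_inv (x : 'I_n) : \sum_(a : 'I_n) (n%:R^-1 : R) = 1.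
Proof. by apply: sumr_inv_card; rewrite ?card_ord // (leq_ltn_trans _ (ltn_ord x)). Qed.

Lemma random_stepE (x a : 'I_n) : random_step R x a = n%:R^-1.
Proof. by rewrite /random_step in_setT card_nbhd. Qed.

Lemma Lcount_size D (h : hist n) x : Lcount D h x = size h.
Proof.
rewrite /Lcount (eq_count (a2 := predT)) => [|y]; last by rewrite in_setT.
by rewrite count_predT size_behead size_rcons size_map.
Qed.

Lemma hit_before_rcons (h : hist n) x d b :
  hit_before (rcons h (x, d, b)) = ((d == None) && b) || hit_before h.
Proof. by rewrite /hit_before has_rcons. Qed.

Variables (eps qbar : R).

Lemma psi_wf_no_hit D (h : hist n) x d : ~~ hit_before h ->
  psi_wf eps qbar D h x d = if d is Some _
                            then (1 - pwf eps qbar (size h)) * n%:R^-1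
                            else pwf eps qbar (size h).
Proof.
move=> no_hit; rewrite /psi_wf in_setT no_hit Lcount_size.
by case: d => [a|]; rewrite ?random_stepE.
Qed.

Lemma psi_wf_is_strategy :
  (forall s, 0 <= pwf eps qbar s <= 1) -> is_strategy (@psi_wf R n eps qbar).
Proof.
move=> pwf01 D h x; rewrite /psi_wf; set p := pwf eps qbar _.
have /andP[p_ge0 p_le1] := pwf01 (Lcount D h x).
split=> [d||a _|_]; rewrite ?in_setT //.
  by case: ifP => _; case: d => [a|]; rewrite ?random_stepE ?mulr_ge0 ?subr_ge0 ?invr_ge0.
rewrite sumr_option; under eq_bigr => a _ do rewrite random_stepE.
by case: ifP => _; rewrite -?mulr_sumr sum_ord_inv ?mulr1 ?add0r ?subrKC.
Qed.

Lemma hitp0 (psi : strategy R n) D r h x : hitp eps psi D r 0 h x = 0.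
Proof. by case: r. Qed.

Lemma PT0 K x0 (psi : strategy R n) : PT eps K x0 psi 0 = 0.
Proof. by rewrite /PT big1 // => D _; rewrite hitp0 mulr0. Qed.

Lemma hitp_psi_wf D r j (h : hist n) x : ~~ hit_before h ->
  hitp eps (psi_wf eps qbar) D r j h x = hazard_pmf (wf_hazard eps qbar) r j (size h).
Proof.
elim: r j h x => [|r IHr] [|j] h x no_hit //=.
rewrite sumr_option psi_wf_no_hit //.
under eq_bigr => y _ do rewrite IHr ?hit_before_rcons // size_rcons.
rewrite sum_nbhd_avg.
under eq_bigr => a _ do rewrite psi_wf_no_hit // IHr ?hit_before_rcons // size_rcons.
under eq_bigr => a _ do
  under eq_bigr => y _ do rewrite IHr ?hit_before_rcons // size_rcons.
under eq_bigr => a _ do rewrite sum_nbhd_avg.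
by rewrite -mulr_suml -mulr_sumr (sum_ord_inv x) mulr1 /wf_hazard; ring.
Qed.

Lemma PT_psi_wf K (x0 : 'I_n) t :
  PT eps K x0 (psi_wf eps qbar) t = hazard_pmf (wf_hazard eps qbar) K t 0.
Proof.
rewrite /PT; under eq_bigr => D _ do rewrite hitp_psi_wf //.
by rewrite -mulr_suml (sum_ord_inv x0) mul1r.
Qed.

Hypotheses (eps_ge0 : 0 <= eps) (eps_le1 : eps <= 1).

Lemma hitp_hazard_bounded (psi : strategy R n) D r h x : is_strategy psi ->
  hazard_bounded eps r (fun j => hitp eps psi D r j h x).
Proof.
move=> psi_strat; elim: r h x => [|r IHr] h x; first exact: hazard_bounded_dirac1.
have [psi_ge0 psi_sum1 _ _] := psi_strat D h x.
pose noisy e j := \sum_(y in nbhd x) #|nbhd x|%:R^-1 * hitp eps psi D r j (rcons h e) y.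
have noisy_hb e : hazard_bounded eps r (noisy e).
  by apply: hazard_bounded_mix (sum_nbhd_inv x) _ => [y _|y _]; rewrite ?invr_ge0.
have noisy0 e : noisy e 0%N = 0 by rewrite /noisy big1 // => y _; rewrite hitp0 mulr0.
pose executed d j : R := if d is Some a then hitp eps psi D r j (rcons h (x, d, true)) a
                        else (j == 0)%:R.
have executed_hb d : hazard_bounded eps r (executed d).
  by case: d => [a|]; [exact: IHr | exact: hazard_bounded_dirac0].
have executed0 d : executed d 0%N <= 1 by case: d => [a|]; rewrite /executed ?hitp0.
apply: (eq_hazard_bounded _ (hazard_bounded_mix (fun d _ => psi_ge0 d) psi_sum1
  (fun d _ => hazard_bounded_step eps_ge0 eps_le1 (executed_hb d)
     (noisy_hb (x, d, false)) (executed0 d) (noisy0 _)))).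
case=> [|j] /=; first by rewrite big1 // => d _; rewrite mulr0.
by apply: eq_bigr => -[a|] _.
Qed.

Lemma PT_hazard_bounded K x0 (psi : strategy R n) : is_strategy psi ->
  hazard_bounded eps K (PT eps K x0 psi).
Proof.
move=> psi_strat; apply: hazard_bounded_mix => [D _ | | D _].
- by rewrite invr_ge0.
- exact: sum_ord_inv.
- exact: hitp_hazard_bounded.
Qed.

End Strategies.

Section Optimality.
Variables (R : realType) (n : nat) (eps qbar : R) (K : nat) (x0 : 'I_n).
Hypotheses (eps_ge0 : 0 <= eps) (eps_lt1 : eps < 1) (qbar_gt0 : 0 < qbar).

Local Notation W := (survival (wf_hazard eps qbar)).
Local Notation psi_wf := (@psi_wf R n eps qbar).
Let eps_le1 : eps <= 1. Proof. exact: ltW. Qed.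
Let psi_wf_strategy : is_strategy psi_wf.
Proof. exact/psi_wf_is_strategy/(pwf_ge0_le1 eps_lt1 qbar_gt0). Qed.

Lemma survival_psi_wf s : (s <= K)%N ->
  1 - \sum_(0 <= i < s.+1) PT eps K x0 psi_wf i = W s.
Proof.
by move=> sK; under eq_bigr => i _ do rewrite PT_psi_wf; exact: survival_hazard_pmf.
Qed.

Lemma survival_psi_wf_le psi : is_strategy psi -> feasible eps K x0 qbar psi ->
  forall s, (s <= K)%N -> W s <= 1 - \sum_(0 <= i < s.+1) PT eps K x0 psi i.
Proof.
move=> psi_strat psi_feas; apply: (survival_le_tail eps_ge0).
- exact: wf_hazard_cases eps_lt1 qbar_gt0.
- exact: wf_survival_ge0 eps_ge0 eps_lt1 qbar_gt0.
- exact: PT0.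
- exact: PT_hazard_bounded.
- exact: psi_feas.
Qed.

Lemma psi_wf_feasible psi : is_strategy psi -> feasible eps K x0 qbar psi ->
  feasible eps K x0 qbar psi_wf.
Proof.
move=> psi_strat psi_feas [|t]; first by rewrite PT0 ltW.
case: (ltngtP t K) => [tK | Kt | ->].
- by rewrite PT_psi_wf hazard_pmf_lt // (wf_flow_le eps_ge0 eps_lt1 qbar_gt0).
- by rewrite PT_psi_wf hazard_pmf_gt // ltW.
rewrite (hazard_bounded_last (PT_hazard_bounded eps_ge0 eps_le1 K x0 psi_wf_strategy)).
rewrite survival_psi_wf //.
apply: le_trans (survival_psi_wf_le psi_strat psi_feas (leqnn K)) _.
by rewrite -(hazard_bounded_last (PT_hazard_bounded eps_ge0 eps_le1 K x0 psi_strat)).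
Qed.

Lemma psi_wf_optimal psi : is_strategy psi -> feasible eps K x0 qbar psi ->
  ET eps K x0 psi_wf <= ET eps K x0 psi.
Proof.
move=> psi_strat psi_feas.
rewrite /ET !(hazard_bounded_mean (PT_hazard_bounded eps_ge0 eps_le1 K x0 _)) //.
apply: ler_sum_nat => s /andP[_ sK]; rewrite survival_psi_wf //.
exact: survival_psi_wf_le.
Qed.

End Optimality.

Theorem lemma8 (R : realType) (n : nat) (eps qbar : R) (K : nat) (x0 : 'I_n) :
  0 <= eps < 1 ->
  0 < qbar <= 1 ->
  qbar^-1 - eps / (1 - eps) \is a Num.int ->
  (exists psi : strategy R n, is_strategy psi /\ feasible eps K x0 qbar psi) ->
  [/\ is_strategy (@psi_wf R n eps qbar),
      feasible eps K x0 qbar (@psi_wf R n eps qbar)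
    & forall psi : strategy R n, is_strategy psi -> feasible eps K x0 qbar psi ->
        ET eps K x0 (@psi_wf R n eps qbar) <= ET eps K x0 psi].
Proof.
move=> /andP[eps_ge0 eps_lt1] /andP[qbar_gt0 _] _ [psi0 [psi0_strat psi0_feas]].
split.
- exact/psi_wf_is_strategy/(pwf_ge0_le1 eps_lt1 qbar_gt0).
- exact: psi_wf_feasible psi0_strat psi0_feas.
- exact: psi_wf_optimal.
Qed.
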